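(* There exist absolute constants $C, c > 0$ and $n_0$ such that for every integer $n \ge n_0$ that is a power of $2$, there is a Boolean function $f:\{0,1\}^{2n}\to\{0,1\}$ satisfying: (1) $\mathrm{Inf}^{-}_i[f] = 0$ for all $i \in \{1,\dots,n\}$; (2) $\mathrm{Inf}^{-}_i[f] \le C/n$ for all $i \in \{n+1,\dots,2n\}$; (3) $\varepsilon(f) \ge c$. In particular, there is no absolute constant $c'>0$ such that every $f:\{0,1\}^m\to\{0,1\}$ has a coordinate $i\in[m]$ with $\mathrm{Inf}^{-}_i[f] \ge c'\,\varepsilon(f)\cdot \frac{\log m}{m}$.
   Context: For $x,y\in\{0,1\}^m$, write $x\preccurlyeq y$ if $x_i\le y_i$ for all $i\in[m]$. A function $g:\{0,1\}^m\to\{0,1\}$ is monotone if $x\preccurlyeq y$ implies $g(x)\le g(y)$. For $x\in\{0,1\}^m$ and $i\in[m]$, $x^{\oplus i}$ denotes $x$ with the $i$-th coordinate flipped. For $f:\{0,1\}^m\to\{0,1\}$, the negative influence of coordinate $i$ is $\mathrm{Inf}^{-}_i[f] := \frac{1}{2^{m-1}}\#\{x\in\{0,1\}^m : f(x) > f(x^{\oplus i}) \text{ and } x\preccurlyeq x^{\oplus i}\}$. The distance to monotonicity is $\varepsilon(f) := \min_{g \text{ monotone}} \Pr_{\mathbf{x}\sim\{0,1\}^m}[f(\mathbf{x})\ne g(\mathbf{x})]$, where $\mathbf{x}$ is uniform. *)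

From mathcomp Require Import all_boot all_order all_algebra.
From mathcomp Require Import reals exp.
Set Implicit Arguments. Unset Strict Implicit. Unset Printing Implicit Defensive.
Import Order.TTheory GRing.Theory Num.Theory.
Local Open Scope ring_scope.

Definition cube (m : nat) := {ffun 'I_m -> bool}.

Definition cle (m : nat) (x y : cube m) : bool := [forall j, (x j <= y j)%N].

Definition flip (m : nat) (x : cube m) (i : 'I_m) : cube m :=
  [ffun j => if j == i then ~~ x j else x j].

Definition monotone (m : nat) (g : cube m -> bool) : Prop :=
  forall x y : cube m, cle x y -> (g x <= g y)%N.

(* Boolean version, used to range over the finite set of monotone functions. *)
Definition monotoneb (m : nat) (g : {ffun cube m -> bool}) : bool :=
  [forall x : cube m, forall y : cube m, cle x y ==> (g x <= g y)%N].

Definition neg_inf (R : realType) (m : nat) (f : cube m -> bool) (i : 'I_m) : R :=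
  (#|[set x : cube m | (f (flip x i) < f x)%N && cle x (flip x i)]|)%:R
    / (2 ^+ m.-1 : R).

Definition ndisagree (m : nat) (f g : cube m -> bool) : nat :=
  #|[set x : cube m | f x != g x]|.

(* The initial value 2^m of the min is an upper
   bound of every disagreement count, so it does not affect the minimum. *)
Definition dist_mono (R : realType) (m : nat) (f : cube m -> bool) : R :=
  (\big[minn/(2 ^ m)%N]_(g : {ffun cube m -> bool} | monotoneb g)
      ndisagree f g)%:R / (2 ^+ m : R).

From mathcomp Require Import all_boot all_order all_algebra.
From mathcomp Require Import reals exp.
From mathcomp Require Import zify ring lra.

(* Take n = 2^K and, for j < 2^(K-4), the block S_j = {j + 2^t : t < K-1} of low
   coordinates; distinct blocks share at most one coordinate, since a sum of two
   powers of two determines its exponents.  Let f(z) hold when some block S_j is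
   all ones while the high coordinate n + j is zero.  Then f is monotone in the
   low coordinates, and flipping n + j up can only decrease f on the 2^(2n-K)
   points where S_j is full and z_(n+j) = 0, so every high coordinate has
   negative influence at most 2/n.  On the other hand, at least half of those
   points have S_j as their only full block, and there the edge in direction
   n + j leads from f = 1 to f = 0 without leaving the region "S_j is the only
   full block"; any monotone function disagrees with f at one end of each such
   edge.  These regions are disjoint for distinct j, which gives
   2^(K-4) * 2^(2n-K-1) = 2^(2n-5) disagreements, i.e. distance at least 1/32.
   Since eps(f) log m / m is then of order log n / n >> 1/n, no bound of the
   form Inf^- >= c' eps log m / m can hold. *)

Set Implicit Arguments. Unset Strict Implicit. Unset Printing Implicit Defensive.
Import Order.TTheory GRing.Theory Num.Theory.

Section PowersOfTwo.
Local Open Scope nat_scope.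

Lemma exp2_sum_sorted_inj a b c d : a <= b -> c <= d ->
  2 ^ a + 2 ^ b = 2 ^ c + 2 ^ d -> a = c /\ b = d.
Proof.
wlog le_ac : a b c d / a <= c => [hwlog le_ab le_cd E|le_ab le_cd E].
  case: (leqP a c) => [le_ac|/ltnW le_ca]; first exact: hwlog.
  by have [-> ->] := hwlog c d a b le_ca le_cd le_ab (esym E).
suff eq_ac : a = c.
  by subst c; split=> //; apply/(@expnI 2)/eqP => //; rewrite -(eqn_add2l (2 ^ a)) E.
apply/eqP; rewrite eqn_leq le_ac /=; apply/negP => lt_ac.
move: E.
have [b' ->] : exists b', b = a + b' by exists (b - a); lia.
have [c' ->] : exists c', c = a + c'.+1 by exists (c - a.+1); lia.
have [d' ->] : exists d', d = a + d'.+1 by exists (d - a.+1); lia.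
(* Cancelling 2^a leaves 1 + 2^b' = 2 * (2^c' + 2^d'): wrong parity, or too small if b' = 0. *)
rewrite !expnD !expnS -{1}[2 ^ a]muln1 -!mulnDr.
move/eqP; rewrite eqn_pmul2l ?expn_gt0 // => /eqP.
have := expn_gt0 2 c'; have := expn_gt0 2 d'.
case: b' => [|b'] /=; last rewrite expnS; lia.
Qed.

Lemma exp2_sum_inj a b c d : 2 ^ a + 2 ^ b = 2 ^ c + 2 ^ d ->
  (a = c /\ b = d) \/ (a = d /\ b = c).
Proof.
case: (leqP a b) => ab; case: (leqP c d) => cd E.
- by left; apply: exp2_sum_sorted_inj.
- by right; have [] := exp2_sum_sorted_inj ab (ltnW cd) (etrans E (addnC _ _)).
- by right; have [] := exp2_sum_sorted_inj (ltnW ab) cd (etrans (addnC _ _) E).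
- left; rewrite addnC [2 ^ c + _]addnC in E.
  by have [] := exp2_sum_sorted_inj (ltnW ab) (ltnW cd) E.
Qed.

Lemma exp2_translate_meet j l t s t' s' : j != l ->
  j + 2 ^ t = l + 2 ^ s -> j + 2 ^ t' = l + 2 ^ s' -> t = t'.
Proof.
move=> ne_jl E E'.
have [[] //|[eq_ts _]] := @exp2_sum_inj t s' t' s ltac:(lia).
by subst s; move: E; rewrite [l + _]addnC addnC => /addnI eq_jl; rewrite eq_jl eqxx in ne_jl.
Qed.

End PowersOfTwo.

Section CardinalBounds.
Local Open Scope nat_scope.
Variable T : finType.

Lemma card_bigcup_le (I : finType) (P : pred I) (F : I -> {set T}) :
  #|\bigcup_(i | P i) F i| <= \sum_(i | P i) #|F i|.
Proof.
elim/big_rec2: _ => [|i k U _ le_Uk]; first by rewrite cards0.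
by rewrite (leq_trans (leq_card_setU _ _).1) ?leq_add2l.
Qed.

Lemma sum_card_setI_disjoint (I : finType) (D : {set T}) (H : I -> {set T}) :
  (forall i j, i != j -> [disjoint H i & H j]) -> \sum_i #|D :&: H i| <= #|D|.
Proof.
move=> disjH.
have disjDH i j : i != j -> [disjoint D :&: H i & D :&: H j].
  by move=> /disjH; apply: disjointW; apply: subsetIr.
under eq_bigr do rewrite -sum1_card.
rewrite -(partition_disjoint_bigcup _ _ disjDH) sum1_card.
by apply/subset_leq_card/bigcupsP => i _; apply: subsetIl.
Qed.

End CardinalBounds.

Section Hypercube.
Local Open Scope nat_scope.
Variable m : nat.
Implicit Types (x z : cube m) (i : 'I_m).

Lemma flipE x i j : flip x i j = if j == i then ~~ x i else x j.
Proof. by rewrite ffunE; case: eqP => [->|]. Qed.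

Lemma flipK i : involutive (fun x : cube m => flip x i).
Proof. by move=> x; apply/ffunP => j; rewrite !flipE eqxx; case: eqP => [->|]; rewrite ?negbK. Qed.

Lemma cle_flip x i : cle x (flip x i) = ~~ x i.
Proof.
apply/forallP/idP => [/(_ i)|x_i j]; first by rewrite flipE eqxx; case: (x i).
by rewrite flipE; case: eqP => [->|]; [case: (x i) x_i|].
Qed.

Lemma monotoneb_monotone (g : {ffun cube m -> bool}) : monotoneb g -> monotone g.
Proof. by move=> /forallP mono_g x y le_xy; have := forallP (mono_g x) y; rewrite le_xy. Qed.

Lemma card_cube_fixed (A : {set 'I_m}) (b : 'I_m -> bool) :
  #|[set z : cube m | [forall i in A, z i == b i]]| = 2 ^ (m - #|A|).
Proof.
pose F i (v : bool) := (i \notin A) || (v == b i).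
have -> : #|[set z : cube m | [forall i in A, z i == b i]]| = #|(family F : pred (cube m))|.
  apply: eq_card => z; rewrite inE; apply/forallP/familyP => z_A i; have := z_A i;
  by rewrite /F; case: (i \in A).
rewrite card_family foldrE big_image /=.
rewrite (eq_bigr (fun i => if i \in ~: A then 2 else 1)) => [|i _].
  by rewrite -big_mkcond prod_nat_const cardsCs setCK card_ord.
rewrite in_setC /F; case: (i \in A) => /=; last by rewrite -card_bool; apply: eq_card.
by rewrite -(card1 (b i)); apply: eq_card => v; rewrite !inE.
Qed.

(* Each edge on which [f] decreases carries a disagreement with any monotone [g]. *)
Lemma card_decreasing_edges_le (f g : cube m -> bool) (y : 'I_m) (G H : {set cube m}) :
  monotone g ->
  (forall z, z \in G -> [&& f z, ~~ f (flip z y), ~~ z y, z \in H & flip z y \in H]) ->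
  #|G| <= #|[set z | f z != g z] :&: H|.
Proof.
move=> mono_g edgeG.
pose psi z := if f z != g z then z else flip z y.
have psi_inj : {in G &, injective psi}.
  move=> z1 z2 /edgeG/and5P[f1 nf1 _ _ _] /edgeG/and5P[f2 nf2 _ _ _]; rewrite /psi.
  case: ifP => _; case: ifP => _ eq_psi //.
  - by move: f1; rewrite eq_psi (negbTE nf2).
  - by move: f2; rewrite -eq_psi (negbTE nf1).
  - exact: (can_inj (flipK y)).
rewrite -(card_in_imset psi_inj); apply/subset_leq_card/subsetP => _ /imsetP[z Gz ->].
have /and5P[fz nfz zy Hz Hfz] := edgeG z Gz.
rewrite /psi !inE; case: ifPn => [->//|/negPn/eqP gz].
rewrite Hfz andbT; have := mono_g _ _ (etrans (cle_flip z y) zy).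
by rewrite -gz fz; case: (g _) nfz; case: (f _).
Qed.

End Hypercube.

Section Construction.
Local Open Scope nat_scope.
Variable K : nat.
Hypothesis K_ge5 : 5 <= K.
Local Notation n := (2 ^ K).
Local Notation nblocks := (2 ^ (K - 4)).
Implicit Types (z : cube (2 * n)) (i : 'I_(2 * n)).

Definition block (j : nat) : {set 'I_(2 * n)} :=
  [set i | [exists t : 'I_K.-1, val i == j + 2 ^ t]].

Definition block_full (j : nat) z : bool := [forall i in block j, z i].

Definition guard_off (j : nat) z : bool :=
  [forall i, (val i == n + j) ==> ~~ z i].

Definition sidon_tribes z : bool :=
  [exists j : 'I_nblocks, block_full j z && guard_off j z].

Lemma block_translate_lt j t : j < nblocks -> t < K.-1 -> j + 2 ^ t < n.
Proof.
move=> lt_j lt_t.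
have -> : n = 2 ^ (K - 4) * 2 ^ 4 by rewrite -expnD subnK // ltnW.
have : 2 ^ t <= 2 ^ (K - 4) * 2 ^ 2 by rewrite -expnD leq_pexp2l //; lia.
lia.
Qed.

Lemma block_lt j i : j < nblocks -> i \in block j -> i < n.
Proof. by move=> lt_j; rewrite inE => /existsP[t /eqP ->]; apply: block_translate_lt. Qed.

Lemma card_block j : j < nblocks -> #|block j| = K.-1.
Proof.
move=> lt_j.
have lt_2n (t : 'I_K.-1) : j + 2 ^ t < 2 * n.
  by have := block_translate_lt lt_j (ltn_ord t); lia.
have -> : block j = [set Ordinal (lt_2n t) | t in setT].
  apply/setP => i; rewrite inE; apply/existsP/imsetP => [[t /eqP eq_i]|[t _ ->]].
    by exists t => //; apply: val_inj.
  by exists t.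
rewrite card_imset ?cardsT ?card_ord // => t t' /(congr1 val) /= /addnI /(@expnI 2 isT).
exact: val_inj.
Qed.

Lemma card_blockI_le1 j l : j != l -> #|block j :&: block l| <= 1.
Proof.
move=> ne_jl; apply/card_le1_eqP => i i'; rewrite !inE.
case/andP=> /existsP[t /eqP eq_i] /existsP[s /eqP eq_i'].
case/andP=> /existsP[t' /eqP eq_i1] /existsP[s' /eqP eq_i1'].
apply: val_inj; rewrite eq_i eq_i1.
by rewrite (exp2_translate_meet ne_jl (etrans (esym eq_i) eq_i') (etrans (esym eq_i1) eq_i1')).
Qed.

Lemma block_full_mono j z z' : cle z z' -> block_full j z -> block_full j z'.
Proof.
move=> /forallP le_zz' /forallP full_z; apply/forallP => i; apply/implyP => /(implyP (full_z i)).
by have := le_zz' i; case: (z i); case: (z' i).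
Qed.

Lemma block_full_flip_hi j z i : j < nblocks -> n <= i ->
  block_full j (flip z i) = block_full j z.
Proof.
move=> lt_j le_ni; apply: eq_forallb => i'; rewrite flipE.
case: eqP => // ->; case: (boolP (i \in block j)) => //= /(block_lt lt_j).
by rewrite ltnNge le_ni.
Qed.

Lemma sidon_tribes_flip_lo z i : i < n -> cle z (flip z i) ->
  sidon_tribes z -> sidon_tribes (flip z i).
Proof.
move=> lt_in le_z /existsP[j /andP[full_j guard_j]]; apply/existsP; exists j.
rewrite (block_full_mono le_z full_j); apply/forallP => i'; apply/implyP => /eqP eq_i'.
rewrite flipE ifN; first by have := forallP guard_j i'; rewrite eq_i' eqxx.
by apply: contraTneq lt_in => <-; rewrite eq_i' -leqNgt leq_addr.
Qed.

Lemma neg_inf_sidon_tribes_lo (R : realType) i : i < n -> (neg_inf R sidon_tribes i = 0)%R.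
Proof.
move=> lt_in; rewrite /neg_inf (_ : [set _ | _] = set0) ?cards0 ?mul0r //.
apply/setP => z; rewrite !inE; apply/negP => /andP[decr le_z].
move: decr (sidon_tribes_flip_lo lt_in le_z).
by case: (sidon_tribes z); case: (sidon_tribes (flip z i)) => // _ /(_ isT).
Qed.

Lemma sidon_tribes_decrease_hi z i : n <= i ->
  sidon_tribes (flip z i) < sidon_tribes z -> ~~ z i ->
  (i - n < nblocks) && block_full (i - n) z.
Proof.
move=> le_ni decr z_i.
have /existsP[j /andP[full_j guard_j]] : sidon_tribes z by case: (sidon_tribes z) decr.
have [eq_i|ne_i] := eqVneq (val i) (n + j); first by rewrite eq_i addKn ltn_ord.
have : sidon_tribes (flip z i).
  apply/existsP; exists j; rewrite (block_full_mono _ full_j) ?cle_flip //.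
  apply/forallP => i'; apply/implyP => /eqP eq_i'; rewrite flipE ifN.
    by have := forallP guard_j i'; rewrite eq_i' eqxx.
  by apply: contra_neq ne_i => <-.
by move=> tribes_flip; rewrite tribes_flip ltnNge leq_b1 in decr.
Qed.

Lemma card_decreasing_hi i : n <= i ->
  #|[set z | (sidon_tribes (flip z i) < sidon_tribes z) && cle z (flip z i)]|
    <= 2 ^ (2 * n - K).
Proof.
move=> le_ni; set E := [set z | _].
have decrE z : z \in E -> (i - n < nblocks) && block_full (i - n) z && ~~ z i.
  by rewrite inE cle_flip => /andP[decr z_i]; rewrite sidon_tribes_decrease_hi.
have [lt_j|] := ltnP (i - n) nblocks; last first.
  move=> le_j; rewrite leqNgt in le_j; suff -> : E = set0 by rewrite cards0.
  by apply/setP => z; rewrite in_set0; apply/negbTE/negP => /decrE; rewrite (negbTE le_j).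
have i_notin : i \notin block (i - n).
  by apply: contraTN le_ni => /(block_lt lt_j); rewrite -ltnNge.
have card_A : #|i |: block (i - n)| = K.
  by rewrite cardsU1 i_notin card_block // add1n prednK // (leq_trans _ K_ge5).
rewrite -[X in 2 * n - X]card_A -(card_cube_fixed _ (fun i' => i' != i)).
apply/subset_leq_card/subsetP => z.
move=> /decrE /andP[/andP[_ full_z] z_i]; rewrite inE; apply/forallP => i'.
apply/implyP => /setU1P[->|in_block]; first by rewrite eqxx; case: (z i) z_i.
rewrite (implyP (forallP full_z i') in_block) eq_sym eqb_id.
by apply: contraTneq in_block => ->.
Qed.

Lemma neg_inf_sidon_tribes_hi (R : realType) i : n <= i ->
  (neg_inf R sidon_tribes i <= 2 / n%:R)%R.
Proof.
move=> le_ni; rewrite /neg_inf; have card_decr := card_decreasing_hi le_ni.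
set c := #|_| in card_decr *.
rewrite ler_pdivrMr ?exprn_gt0 // mulrAC ler_pdivlMr ?ltr0n ?expn_gt0 //.
rewrite -natrX -!natrM ler_nat; apply: (leq_trans (leq_mul card_decr (leqnn n))).
have le_K2n : K <= 2 * n by rewrite (leq_trans (ltnW (ltn_expl K (ltnSn 1)))) ?leq_pmull.
by rewrite -expnD subnK // -[2 * 2 ^ (2 * n).-1]expnS prednK ?muln_gt0 ?expn_gt0.
Qed.

Definition only_full (j : 'I_nblocks) : {set cube (2 * n)} :=
  [set z | block_full j z && [forall l : 'I_nblocks, (l != j) ==> ~~ block_full l z]].

Definition pivots (j : 'I_nblocks) : {set cube (2 * n)} :=
  [set z | guard_off j z & z \in only_full j].

Lemma only_full_disjoint j l : j != l -> [disjoint only_full j & only_full l].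
Proof.
move=> ne_jl; rewrite -setI_eq0; apply/eqP/setP => z; rewrite !inE.
apply/negbTE; rewrite negb_and -implybE; apply/implyP => /andP[full_j /forallP only_j].
by rewrite negb_and (implyP (only_j l)) // eq_sym.
Qed.

Lemma card_full_guard_ge (j : 'I_nblocks) :
  2 ^ (2 * n - K) <= #|[set z | block_full j z && guard_off j z]|.
Proof.
set B := [set i : 'I_(2 * n) | val i == n + j].
have card_B : #|B| <= 1.
  apply/card_le1_eqP => i i'; rewrite !inE => /eqP eq_i /eqP eq_i'.
  by apply: val_inj; rewrite eq_i eq_i'.
set A := block j :|: B.
have card_A : #|A| <= K.
  rewrite (leq_trans (leq_card_setU _ _).1) // card_block //.
  by rewrite (leq_trans (leq_add (leqnn _) card_B)) // addn1 prednK // (leq_trans _ K_ge5).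
apply: (leq_trans (leq_pexp2l _ (leq_sub2l _ card_A))) => //.
rewrite -(card_cube_fixed A (fun i => val i != n + j)); apply/subset_leq_card/subsetP => z.
rewrite !inE => /forallP fixed_z; apply/andP; split; apply/forallP => i; apply/implyP => i_in.
  have := implyP (fixed_z i); rewrite in_setU i_in => /(_ isT) /eqP ->.
  by apply: contraTneq (block_lt (ltn_ord j) i_in) => ->; rewrite -leqNgt leq_addr.
by have := implyP (fixed_z i); rewrite !inE i_in orbT => /(_ isT) /eqP ->; rewrite negbK.
Qed.

Lemma card_full2_le (j l : 'I_nblocks) : j != l ->
  #|[set z | block_full j z && block_full l z]| <= 2 ^ (2 * n - (2 * K - 3)).
Proof.
move=> ne_jl; set A := block j :|: block l.
have card_A : 2 * K - 3 <= #|A|.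
  have := cardsU (block j) (block l); rewrite -/A !card_block //.
  have := @card_blockI_le1 j l ne_jl; lia.
apply: leq_trans (leq_pexp2l _ (leq_sub2l _ card_A)) => //.
rewrite -(card_cube_fixed A (fun _ => true)); apply/subset_leq_card/subsetP => z.
rewrite !inE => /andP[full_j full_l]; apply/forallP => i; apply/implyP.
by case/setUP => [/(implyP (forallP full_j i))|/(implyP (forallP full_l i))] ->.
Qed.

Lemma card_pivots_ge (j : 'I_nblocks) : 2 ^ (2 * n - K.+1) <= #|pivots j|.
Proof.
have lt_Kn : K < n by apply: ltn_expl.
pose both l := [set z | block_full j z && block_full l z].
have cover : [set z | block_full j z && guard_off j z]
    \subset pivots j :|: \bigcup_(l | l != j) both l.
  apply/subsetP => z; rewrite !inE => /andP[full_j guard_j]; rewrite full_j guard_j /=.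
  case: (boolP [forall l, _]) => //= /forallPn[l]; rewrite negb_imply negbK.
  by case/andP=> ne_lj full_l; apply/bigcupP; exists l; rewrite // inE full_j.
have sum_both : \sum_(l | l != j) #|both l| <= 2 ^ (2 * n - K.+1).
  apply: (@leq_trans (\sum_(l | l != j) 2 ^ (2 * n - (2 * K - 3)))).
    by apply: leq_sum => l; rewrite eq_sym => /card_full2_le.
  rewrite sum_nat_const (leq_trans (leq_mul (max_card _) (leqnn _))) // card_ord -expnD.
  by apply: leq_pexp2l => //; lia.
have double : 2 ^ (2 * n - K) = 2 ^ (2 * n - K.+1) + 2 ^ (2 * n - K.+1).
  by rewrite addnn -mul2n -[2 * 2 ^ (2 * n - K.+1)]expnS; congr (2 ^ _); lia.
have := leq_trans (subset_leq_card cover) (leq_card_setU _ _).1.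
move=> /(leq_trans (card_full_guard_ge j)); rewrite double.
move=> /leq_trans/(_ (leq_add (leqnn _) (leq_trans (card_bigcup_le _ _) sum_both))).
by rewrite leq_add2r.
Qed.

Lemma pivot_edge (j : 'I_nblocks) (y : 'I_(2 * n)) :
  val y = n + j -> forall z, z \in pivots j ->
  [&& sidon_tribes z, ~~ sidon_tribes (flip z y), ~~ z y,
      z \in only_full j & flip z y \in only_full j].
Proof.
move=> eq_y z; rewrite !inE => /and3P[guard_j full_j only_j].
have le_ny : n <= y by rewrite eq_y leq_addr.
have full_flip (l : 'I_nblocks) : block_full l (flip z y) = block_full l z.
  exact: block_full_flip_hi (ltn_ord l) le_ny.
have z_y : ~~ z y by have := forallP guard_j y; rewrite eq_y eqxx.
rewrite z_y full_flip full_j only_j andbT /=; apply/and3P; split.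
- by apply/existsP; exists j; rewrite full_j guard_j.
- apply/negP => /existsP[l /andP[full_l guard_l]]; rewrite full_flip in full_l.
  have [eq_lj|ne_lj] := eqVneq l j.
    by have := forallP guard_l y; rewrite eq_y eq_lj eqxx flipE eqxx negbK (negbTE z_y).
  by have := implyP (forallP only_j l) ne_lj; rewrite full_l.
- by apply/forallP => l; rewrite full_flip; apply: (forallP only_j).
Qed.

Lemma card_disagree_sidon_tribes_ge (g : cube (2 * n) -> bool) : monotone g ->
  2 ^ (2 * n - 5) <= #|[set z | sidon_tribes z != g z]|.
Proof.
move=> mono_g; have lt_Kn : K < n by apply: ltn_expl.
have guard_lt (j : 'I_nblocks) : n + j < 2 * n.
  have : 2 ^ (K - 4) <= n by rewrite leq_exp2l // leq_subr.
  have := ltn_ord j; lia.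
have per_block (j : 'I_nblocks) :
    2 ^ (2 * n - K.+1) <= #|[set z | sidon_tribes z != g z] :&: only_full j|.
  apply: leq_trans (card_pivots_ge j) _.
  exact: card_decreasing_edges_le mono_g (pivot_edge (y := Ordinal (guard_lt j)) erefl).
apply: leq_trans _ (sum_card_setI_disjoint _ only_full_disjoint).
apply: (@leq_trans (\sum_(j < nblocks) 2 ^ (2 * n - K.+1))).
  by rewrite big_const_ord iter_addn_0 -expnD leq_exp2l //; lia.
by apply: leq_sum => j _; apply: per_block.
Qed.

Lemma dist_mono_sidon_tribes_ge (R : realType) : (1 / 32 <= dist_mono R sidon_tribes)%R.
Proof.
have le_5_2n : 5 <= 2 * n by have := ltn_expl K (isT : 1 < 2); lia.
have min_ge : 2 ^ (2 * n - 5) <=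
    \big[minn/2 ^ (2 * n)]_(g : {ffun cube (2 * n) -> bool} | monotoneb g)
      ndisagree sidon_tribes g.
  apply: (big_ind (fun v => 2 ^ (2 * n - 5) <= v)).
  - by rewrite leq_exp2l // leq_subr.
  - by move=> u v le_u le_v; rewrite leq_min le_u le_v.
  - by move=> g /monotoneb_monotone; apply: card_disagree_sidon_tribes_ge.
rewrite /dist_mono ler_pdivlMr ?exprn_gt0 //.
apply: le_trans (_ : (2 ^ (2 * n - 5))%:R <= _)%R.
  rewrite natrX -{1}(subnK le_5_2n) exprD.
  have -> : ((2 : R) ^+ 5 = 32)%R by rewrite -natrX.
  lra.
by rewrite ler_nat.
Qed.

Lemma neg_inf_sidon_tribes_le (R : realType) i : (neg_inf R sidon_tribes i <= 2 / n%:R)%R.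
Proof.
have [lt_in|le_ni] := ltnP i n; last exact: neg_inf_sidon_tribes_hi.
by rewrite neg_inf_sidon_tribes_lo // divr_ge0 // ler0n.
Qed.

End Construction.

Arguments sidon_tribes : clear implicits.

Local Open Scope ring_scope.

Lemma ln_pow2_unbounded (R : realType) (a : R) :
  exists K, (5 <= K)%N /\ a < ln ((2 * 2 ^ K)%N%:R : R).
Proof.
have ln2_gt0 : 0 < ln (2 : R) by apply: ln_gt0; lra.
pose K := maxn 5 (Num.truncn ((ln 2)^-1 * a)); exists K; split; first exact: leq_maxl.
rewrite -expnS natrX lnXn // -[ln 2 *+ _]mulr_natr -ltr_pdivrMl //.
by apply: (lt_le_trans (truncnS_gt _)); rewrite ler_nat ltnS leq_maxr.
Qed.

Unset Implicit Arguments.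

Theorem mainTheorem1 (R : realType) :
  (exists (C c : R) (n0 : nat), 0 < C /\ 0 < c /\
     forall n : nat, (n0 <= n)%N -> (exists k : nat, n = (2 ^ k)%N) ->
       exists f : cube (2 * n) -> bool,
         (forall i : 'I_(2 * n), (i < n)%N -> neg_inf R f i = 0) /\
         (forall i : 'I_(2 * n), (n <= i)%N -> neg_inf R f i <= C / n%:R) /\
         c <= dist_mono R f)
  /\
  ~ (exists c' : R, 0 < c' /\
       forall (m : nat) (f : cube m -> bool), (0 < m)%N ->
         exists i : 'I_m,
           c' * dist_mono R f * (ln (m%:R : R) / m%:R) <= neg_inf R f i).
Proof.
split.
  exists 2, (1 / 32), 32%N; split; first by []; split; first by rewrite divr_gt0.
  move=> n + [K eq_n]; subst n; rewrite -[32%N]/(2 ^ 5)%N leq_exp2l // => K_ge5.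
  exists (sidon_tribes K); split; [|split].
  - by move=> i; apply: neg_inf_sidon_tribes_lo.
  - by move=> i; apply: neg_inf_sidon_tribes_hi.
  - exact: dist_mono_sidon_tribes_ge.
case=> c' [c'_gt0 log_bound].
have [K [K_ge5 ln_gt]] := ln_pow2_unbounded (128 / c').
have [|i] := log_bound _ (sidon_tribes K); first by rewrite muln_gt0 expn_gt0.
move=> /le_trans/(_ (neg_inf_sidon_tribes_le K_ge5 R i)).
have := dist_mono_sidon_tribes_ge K_ge5 R.
move: ln_gt; set L := ln _; set d := dist_mono _ _; rewrite natrM; set N := (2 ^ K)%:R.
have N_gt0 : 0 < N by rewrite ltr0n expn_gt0.
have -> : c' * d * (L / (2 * N)) = (c' * d * L / 2) / N by field; rewrite gt_eqF.
rewrite ltr_pdivrMr // !ler_pdivrMr // divfK ?gt_eqF //.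
nra.
Qed.
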